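(* For all integers $i,j,k,m\ge0$: if $\omega_i+\omega_j-\omega_k-\omega_m=0$, or $\omega_i-\omega_j+\omega_k-\omega_m=0$, or $\omega_i-\omega_j-\omega_k+\omega_m=0$, then $C_{ijkm}=\omega_{\min\{i,j,k,m\}}$.
   Context: $\omega_n=n+1$ and $C_{ijkm}=\frac2\pi\int_{-1}^1U_i(y)U_j(y)U_k(y)U_m(y)\sqrt{1-y^2}\,dy$, $U_n$ the Chebyshev polynomial of the second kind of degree $n$. *)

From Stdlib Require Import Reals.
From Coquelicot Require Import Coquelicot.
Open Scope R_scope.

(* Chebyshev polynomials of the second kind, as real functions:
   U_0 = 1, U_1 = 2y, U_{n+2} = 2y U_{n+1} - U_n. *)
Fixpoint chebU_aux (n : nat) (y : R) : R * R :=
  (* returns (U_n y, U_{n+1} y) *)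
  match n with
  | O => (1, 2 * y)
  | S n' => let p := chebU_aux n' y in (snd p, 2 * y * snd p - fst p)
  end.

Definition chebU (n : nat) (y : R) : R := fst (chebU_aux n y).

Definition omega (n : nat) : R := INR n + 1.

Definition Ccoef (i j k m : nat) : R :=
  2 / PI * RInt (fun y => chebU i y * chebU j y * chebU k y * chebU m y
                          * sqrt (1 - y ^ 2)) (-1) 1.

(* The Chebyshev polynomials of the second kind linearize as
   U_i U_(i+d) = sum_(s <= i) U_(d+2s), and the substitution y = cos t, under
   which U_n(cos t) sin t = sin((n+1) t), shows that they are orthogonal for
   the weight sqrt(1-y^2) with squared norm pi/2.  If i <= j, k <= m, i <= k
   and i + j = k + m, expanding U_i U_j and U_k U_m therefore makes C_ijkm
   the number of pairs (s, t), s <= i, t <= k, with j - i + 2s = m - k + 2t;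
   each s has the single partner t = s + k - i, so C_ijkm = i + 1.  Each of
   the three resonance conditions is i + j = k + m up to a permutation of the
   indices, and C_ijkm is symmetric in them. *)

From Stdlib Require Import Reals Lra Lia.
From Coquelicot Require Import Coquelicot.
Open Scope R_scope.

Lemma nat_ind2 (P : nat -> Prop) :
  P 0%nat -> P 1%nat -> (forall n, P n -> P (S n) -> P (S (S n))) ->
  forall n, P n.
Proof.
  intros H0 H1 HS n.
  assert (H : P n /\ P (S n)) by (induction n; intuition).
  apply H.
Qed.

Lemma chebU_0 y : chebU 0 y = 1.
Proof. reflexivity. Qed.

Lemma chebU_1 y : chebU 1 y = 2 * y.
Proof. reflexivity. Qed.

Lemma chebU_SS n y : chebU (S (S n)) y = 2 * y * chebU (S n) y - chebU n y.
Proof. reflexivity. Qed.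

Lemma continuity_chebU n : continuity (chebU n).
Proof.
  induction n as [| |n IH0 IH1] using nat_ind2.
  - apply continuity_const. intros x y. reflexivity.
  - change (continuity (fun y => 2 * y)).
    apply continuity_scal, derivable_continuous, derivable_id.
  - change (continuity (fun y => 2 * y * chebU (S n) y - chebU n y)).
    apply continuity_minus; [apply continuity_mult|]; auto.
    apply continuity_scal, derivable_continuous, derivable_id.
Qed.

Lemma chebU_cos_mul_sin n t : chebU n (cos t) * sin t = sin (INR (S n) * t).
Proof.
  induction n as [| |n IH0 IH1] using nat_ind2.
  - rewrite chebU_0. replace (INR 1 * t) with t by (simpl; ring). ring.
  - rewrite chebU_1. replace (INR 2 * t) with (2 * t) by (simpl; ring).
    rewrite sin_2a. ring.
  - rewrite chebU_SS, Rmult_minus_distr_r, Rmult_assoc, IH0, IH1.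
    rewrite !S_INR.
    replace ((INR n + 1 + 1 + 1) * t) with ((INR n + 1 + 1) * t + t) by ring.
    replace ((INR n + 1) * t) with ((INR n + 1 + 1) * t - t) by ring.
    rewrite sin_plus, sin_minus. ring.
Qed.

Lemma chebU_mul_chebU_add i d y :
  chebU i y * chebU (i + d) y = sum_f_R0 (fun s => chebU (d + 2 * s) y) i.
Proof.
  revert d. induction i as [| |i IH0 IH1] using nat_ind2; intros d.
  - simpl. rewrite chebU_0, Nat.add_0_r. ring.
  - simpl. rewrite Nat.add_0_r, chebU_1.
    replace (d + S (S 0))%nat with (S (S d)) by lia.
    rewrite chebU_SS. ring.
  - assert (Hup : 2 * y * chebU (S i) y * chebU (S (S i) + d) y =
      sum_f_R0 (fun s => chebU (d + 2 * s) y + chebU (S (S d) + 2 * s) y) (S i)).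
    { replace (S (S i) + d)%nat with (S i + S d)%nat by lia.
      rewrite Rmult_assoc, IH1, scal_sum.
      apply sum_eq. intros s _.
      replace (S d + 2 * s)%nat with (S (d + 2 * s)) by lia.
      replace (S (S d) + 2 * s)%nat with (S (S (d + 2 * s))) by lia.
      rewrite chebU_SS. ring. }
    assert (Hdown : chebU i y * chebU (S (S i) + d) y =
                    sum_f_R0 (fun s => chebU (S (S d) + 2 * s) y) i).
    { replace (S (S i) + d)%nat with (i + S (S d))%nat by lia. apply IH0. }
    rewrite chebU_SS, Rmult_minus_distr_r, Hup, Hdown, plus_sum, !tech5.
    replace (S (S d) + 2 * S i)%nat with (d + 2 * S (S i))%nat by lia.
    ring.
Qed.

Lemma is_RInt_ext_eq (f g : R -> R) (a b l l' : R) :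
  (forall x, Rmin a b < x < Rmax a b -> f x = g x) -> l = l' ->
  is_RInt f a b l -> is_RInt g a b l'.
Proof. intros Hfg <-. apply is_RInt_ext, Hfg. Qed.

Lemma is_RInt_cos_0_PI (n : Z) :
  is_RInt (fun t => cos (IZR n * t)) 0 PI (if Z.eq_dec n 0 then PI else 0).
Proof.
  destruct (Z.eq_dec n 0) as [->|Hn].
  - apply (is_RInt_ext_eq (fun _ => 1) _ _ _ (scal (PI - 0) 1)).
    + intros t _. rewrite Rmult_0_l, cos_0. reflexivity.
    + cbn. ring.
    + apply (@is_RInt_const R_NormedModule).
  - assert (Hn' : IZR n <> 0) by (apply not_0_IZR; exact Hn).
    set (F := fun t => sin (IZR n * t) / IZR n).
    apply (is_RInt_ext_eq (fun t => cos (IZR n * t)) _ _ _ (minus (F PI) (F 0))).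
    + intros t _. reflexivity.
    + unfold F. cbn.
      rewrite Rmult_0_r, sin_0, (sin_eq_0_1 (IZR n * PI)) by (exists n; reflexivity).
      field. exact Hn'.
    + apply (@is_RInt_derive R_CompleteNormedModule).
      * intros t _. unfold F. auto_derive; [exact I|]. field. exact Hn'.
      * intros t _. apply continuity_pt_filterlim.
        apply continuity_pt_comp with (f1 := fun t => IZR n * t).
        -- apply continuity_pt_scal, derivable_continuous_pt, derivable_pt_id.
        -- apply continuity_cos.
Qed.

Lemma is_RInt_sin_mul_sin_0_PI (a b : nat) :
  is_RInt (fun t => sin (INR (S a) * t) * sin (INR (S b) * t)) 0 PI
    (if Nat.eq_dec a b then PI / 2 else 0).
Proof.
  assert (H := is_RInt_scal _ _ _ (/ 2) _
    (is_RInt_minus _ _ _ _ _ _ (is_RInt_cos_0_PI (Z.of_nat a - Z.of_nat b))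
                               (is_RInt_cos_0_PI (Z.of_nat a + Z.of_nat b + 2)))).
  revert H. apply is_RInt_ext_eq.
  - intros t _. rewrite minus_IZR, !plus_IZR, <- !INR_IZR_INZ, !S_INR.
    replace ((INR a - INR b) * t) with ((INR a + 1) * t - (INR b + 1) * t) by ring.
    replace ((INR a + INR b + 2) * t) with ((INR a + 1) * t + (INR b + 1) * t) by ring.
    rewrite cos_minus, cos_plus. cbn; lra.
  - destruct (Z.eq_dec (Z.of_nat a + Z.of_nat b + 2) 0); [lia|].
    destruct (Nat.eq_dec a b), (Z.eq_dec (Z.of_nat a - Z.of_nat b) 0); try lia;
      cbn; field.
Qed.

Lemma is_RInt_cos_substitution (f : R -> R) (l : R) :
  (forall y, continuous f y) ->
  is_RInt (fun t => sin t * f (cos t)) 0 PI l -> is_RInt f (-1) 1 l.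
Proof.
  intros Hf Hl.
  assert (Hcomp : is_RInt (fun t => scal (- sin t) (f (cos t))) PI 0
                          (RInt f (cos PI) (cos 0))).
  { apply (@is_RInt_comp R_CompleteNormedModule).
    - intros t _. apply Hf.
    - intros t _. split.
      + auto_derive; [exact I|]. ring.
      + apply continuity_pt_filterlim, continuity_pt_opp, continuity_sin. }
  rewrite cos_PI, cos_0 in Hcomp.
  apply is_RInt_swap, is_RInt_opp in Hcomp.
  replace l with (RInt f (-1) 1).
  - apply (@RInt_correct R_CompleteNormedModule).
    apply (@ex_RInt_continuous R_CompleteNormedModule).
    intros y _. apply Hf.
  - rewrite <- (is_RInt_unique _ _ _ _ Hl). symmetry.
    apply is_RInt_unique. revert Hcomp. apply is_RInt_ext_eq.
    + intros t _. cbn. ring.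
    + apply opp_opp.
Qed.

Lemma continuity_sqrt_1_minus_sqr : continuity (fun y => sqrt (1 - y ^ 2)).
Proof.
  intros x. apply continuity_pt_filterlim, (continuous_sqrt_comp (fun y => 1 - y ^ 2)).
  apply continuity_pt_filterlim, continuity_minus.
  - apply continuity_const. intros u v. reflexivity.
  - apply derivable_continuous, derivable_pow.
Qed.

Lemma is_RInt_chebU_mul_chebU (a b : nat) :
  is_RInt (fun y => chebU a y * chebU b y * sqrt (1 - y ^ 2)) (-1) 1
    (if Nat.eq_dec a b then PI / 2 else 0).
Proof.
  apply is_RInt_cos_substitution.
  - intros y. apply continuity_pt_filterlim.
    apply continuity_mult; [apply continuity_mult|];
      auto using continuity_chebU, continuity_sqrt_1_minus_sqr.
  - generalize (is_RInt_sin_mul_sin_0_PI a b). apply is_RInt_ext_eq; [|reflexivity].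
    intros t Ht. rewrite Rmin_left, Rmax_right in Ht by (pose proof PI_RGT_0; lra).
    replace (1 - cos t ^ 2) with (sin t ^ 2)
      by (pose proof (sin2_cos2 t); unfold Rsqr in *; nra).
    rewrite sqrt_pow2 by (apply sin_ge_0; lra).
    rewrite <- !chebU_cos_mul_sin. ring.
Qed.

Lemma is_RInt_sum_f_R0 (F : nat -> R -> R) (l : nat -> R) (a b : R) (N : nat) :
  (forall n, (n <= N)%nat -> is_RInt (F n) a b (l n)) ->
  is_RInt (fun y => sum_f_R0 (fun n => F n y) N) a b (sum_f_R0 l N).
Proof.
  induction N as [|N IH]; intros H; simpl.
  - apply H. lia.
  - apply (@is_RInt_plus R_NormedModule).
    + apply IH. intros n Hn. apply H. lia.
    + apply H. lia.
Qed.

Lemma sum_f_R0_single (g : nat -> R) (x N : nat) :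
  (x <= N)%nat -> (forall n, (n <= N)%nat -> n <> x -> g n = 0) ->
  sum_f_R0 g N = g x.
Proof.
  induction N as [|N IH]; intros Hx Hg; simpl.
  - f_equal. lia.
  - destruct (Nat.eq_dec x (S N)) as [->|Hne].
    + rewrite sum_eq_R0; [ring|]. intros n Hn. apply Hg; lia.
    + rewrite IH, (Hg (S N)); try ring; try lia. intros n Hn. apply Hg. lia.
Qed.

Lemma sum_f_R0_mul_sum_f_R0 (A B : nat -> R) (M N : nat) :
  sum_f_R0 A M * sum_f_R0 B N =
  sum_f_R0 (fun s => sum_f_R0 (fun t => A s * B t) N) M.
Proof.
  rewrite Rmult_comm, scal_sum. apply sum_eq. intros s _.
  rewrite scal_sum. apply sum_eq. intros t _. ring.
Qed.

Lemma Ccoef_sorted i j k m :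
  (i <= j)%nat -> (k <= m)%nat -> (i <= k)%nat -> (i + j = k + m)%nat ->
  Ccoef i j k m = omega i.
Proof.
  intros Hij Hkm Hik Hsum.
  set (g := fun s t =>
    if Nat.eq_dec (j - i + 2 * s) (m - k + 2 * t) then PI / 2 else 0).
  assert (Hexpand : forall y,
    chebU i y * chebU j y * chebU k y * chebU m y * sqrt (1 - y ^ 2) =
    sum_f_R0 (fun s => sum_f_R0 (fun t =>
      chebU (j - i + 2 * s) y * chebU (m - k + 2 * t) y * sqrt (1 - y ^ 2)) k) i).
  { intros y.
    replace (chebU i y * chebU j y * chebU k y * chebU m y * sqrt (1 - y ^ 2))
      with (chebU i y * chebU (i + (j - i)) y * (chebU k y * chebU (k + (m - k)) y)
            * sqrt (1 - y ^ 2))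
      by (replace (i + (j - i))%nat with j by lia;
          replace (k + (m - k))%nat with m by lia; ring).
    rewrite !chebU_mul_chebU_add, sum_f_R0_mul_sum_f_R0, Rmult_comm, scal_sum.
    apply sum_eq. intros s _.
    rewrite Rmult_comm, scal_sum. apply sum_eq. intros t _. ring. }
  assert (Hint : is_RInt
    (fun y => chebU i y * chebU j y * chebU k y * chebU m y * sqrt (1 - y ^ 2))
    (-1) 1 (sum_f_R0 (fun s => sum_f_R0 (g s) k) i)).
  { apply (is_RInt_ext _ _ _ _ _ (fun y _ => eq_sym (Hexpand y))).
    apply is_RInt_sum_f_R0. intros s _.
    apply is_RInt_sum_f_R0. intros t _.
    apply is_RInt_chebU_mul_chebU. }
  assert (Hdiag : forall s, (s <= i)%nat -> sum_f_R0 (g s) k = PI / 2).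
  { intros s Hs. rewrite (sum_f_R0_single _ (s + (k - i))); unfold g.
    - destruct Nat.eq_dec; [reflexivity|lia].
    - lia.
    - intros t _ Ht. destruct Nat.eq_dec; [lia|reflexivity]. }
  unfold Ccoef, omega.
  rewrite (is_RInt_unique _ _ _ _ Hint), (sum_eq _ _ _ Hdiag), sum_cte, S_INR.
  field. apply PI_neq0.
Qed.

Lemma Ccoef_swap12 i j k m : Ccoef i j k m = Ccoef j i k m.
Proof. unfold Ccoef. f_equal. apply RInt_ext. intros y _. cbn. ring. Qed.

Lemma Ccoef_swap23 i j k m : Ccoef i j k m = Ccoef i k j m.
Proof. unfold Ccoef. f_equal. apply RInt_ext. intros y _. cbn. ring. Qed.

Lemma Ccoef_swap34 i j k m : Ccoef i j k m = Ccoef i j m k.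
Proof. unfold Ccoef. f_equal. apply RInt_ext. intros y _. cbn. ring. Qed.

Lemma Ccoef_swap_pairs i j k m : Ccoef i j k m = Ccoef k m i j.
Proof. unfold Ccoef. f_equal. apply RInt_ext. intros y _. cbn. ring. Qed.

Lemma Ccoef_pairs_sorted i j k m :
  (i <= j)%nat -> (k <= m)%nat -> (i + j = k + m)%nat ->
  Ccoef i j k m = omega (Nat.min i k).
Proof.
  intros Hij Hkm Hsum. destruct (Nat.le_ge_cases i k) as [Hik|Hki].
  - rewrite Ccoef_sorted by lia. f_equal. lia.
  - rewrite Ccoef_swap_pairs, Ccoef_sorted by lia. f_equal. lia.
Qed.

Lemma Ccoef_of_add_eq i j k m : (i + j = k + m)%nat ->
  Ccoef i j k m = omega (Nat.min i (Nat.min j (Nat.min k m))).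
Proof.
  intros Hsum.
  destruct (Nat.le_ge_cases i j), (Nat.le_ge_cases k m).
  - rewrite Ccoef_pairs_sorted by lia. f_equal. lia.
  - rewrite Ccoef_swap34, Ccoef_pairs_sorted by lia. f_equal. lia.
  - rewrite Ccoef_swap12, Ccoef_pairs_sorted by lia. f_equal. lia.
  - rewrite Ccoef_swap12, Ccoef_swap34, Ccoef_pairs_sorted by lia. f_equal. lia.
Qed.

Lemma omega_add_inj i j k m :
  omega i + omega j = omega k + omega m -> (i + j = k + m)%nat.
Proof. unfold omega. intros H. apply INR_eq. rewrite !plus_INR. lra. Qed.

Theorem lemma5p2 (i j k m : nat) :
  (omega i + omega j - omega k - omega m = 0 \/
   omega i - omega j + omega k - omega m = 0 \/
   omega i - omega j - omega k + omega m = 0) ->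
  Ccoef i j k m = omega (Nat.min i (Nat.min j (Nat.min k m))).
Proof.
  intros [H|[H|H]].
  - apply Ccoef_of_add_eq, omega_add_inj. lra.
  - rewrite Ccoef_swap23, Ccoef_of_add_eq by (apply omega_add_inj; lra).
    f_equal. lia.
  - rewrite Ccoef_swap34, Ccoef_swap23, Ccoef_of_add_eq by (apply omega_add_inj; lra).
    f_equal. lia.
Qed.
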